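(* Assume the setting described in the context and suppose the event $\mathcal{E}$ holds. Let $\gamma\in(0,1)$, let $S\subseteq[n]$ with $|S|=k$ and $\|\mathbf{v}_S\|_2\ge\sqrt\gamma$, and let $\mathbf{w}^{(0)}$ be a unit eigenvector for the largest eigenvalue of $\hat{\boldsymbol{\Gamma}}_{S,S}$, zero-padded to $\mathbb{R}^n$. Then there is an absolute constant $C_1>0$ such that $$ \alpha_0:=|\langle\mathbf{w}^{(0)},\mathbf{v}\rangle|\ \ge\ \sqrt\gamma\sqrt{\Big(1-\frac{C_1(1+\theta)^2}{\theta^2\gamma^2}\cdot\frac{k\log n}{m}\Big)_+}, $$ where $(x)_+=\max\{x,0\}$. In particular, there are absolute constants $C>0$ and $c_0\in(0,1/2]$ such that if $m\ge C\frac{(1+\theta)^2}{\theta^2\gamma^2}k\log n$, then $\alpha_0\ge c_0\gamma$.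
   Context: Let $n\ge 2$, $m\ge1$, $\theta>0$, $k\in[n]$; $\mathbf{v}\in\mathbb{R}^n$ a unit vector with at most $k$ nonzero entries; $\mathbf{x}_1,\dots,\mathbf{x}_m$ i.i.d. $\mathcal{N}(\mathbf{0},\mathbf{I}_n+\theta\mathbf{v}\mathbf{v}^\top)$; $\hat{\boldsymbol{\Gamma}}=\frac1m\sum_i\mathbf{x}_i\mathbf{x}_i^\top-\mathbf{I}_n$; $\mathbf{W}=\hat{\boldsymbol{\Gamma}}-\theta\mathbf{v}\mathbf{v}^\top$. $\mathbf{v}_S$ is the restriction of $\mathbf{v}$ to $S$, $\hat{\boldsymbol{\Gamma}}_{S,S}$ a principal submatrix, $\|\cdot\|_2$ Euclidean/spectral norm. Fix an absolute constant $C_0>0$; $\mathcal{E}$ is the event that $\|\mathbf{W}_{S,S}\|_2\le C_0(1+\theta)\sqrt{|S|\log n/m}$ for all nonempty $S\subseteq[n]$. (In the paper, $S$ is the final support $S^{(k)}$ of the SEP algorithm and $\mathbf{w}^{(0)}$ its output.) Absolute constants do not depend on $n,m,k,\theta,\mathbf{v},\gamma$. *)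

From HB Require Import structures.
From mathcomp Require Import all_boot all_order all_algebra.
From mathcomp Require Import all_classical all_reals all_analysis.
Set Implicit Arguments. Unset Strict Implicit. Unset Printing Implicit Defensive.
Import Order.TTheory GRing.Theory Num.Theory.
Local Open Scope ring_scope.
Local Open Scope classical_set_scope.

Section Defs.
Variable R : realType.

Definition norm2 (p : nat) (u : 'cV[R]_p) : R := Num.sqrt (\sum_i u i 0 ^+ 2).
Definition dot (p : nat) (u w : 'cV[R]_p) : R := \sum_i u i 0 * w i 0.

Definition opnorm (p q : nat) (A : 'M[R]_(p, q)) : R :=
  sup [set norm2 (A *m u) | u in [set u : 'cV[R]_q | norm2 u = 1]].

(* Indexing of a subset S of [n] by 'I_#|S| (increasing enumeration). *)
Definition sidx (n : nat) (S : {set 'I_n}) : 'I_#|S| -> 'I_n :=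
  fun i => @enum_val _ (mem S) i.
Arguments sidx [n] S i.

Definition subsq (n : nat) (S : {set 'I_n}) (A : 'M[R]_n) : 'M[R]_#|S| :=
  mxsub (sidx S) (sidx S) A.
Definition vsub (n : nat) (S : {set 'I_n}) (v : 'cV[R]_n) : 'cV[R]_#|S| :=
  rowsub (sidx S) v.

Definition pad (n : nat) (S : {set 'I_n}) (y : 'cV[R]_#|S|) : 'cV[R]_n :=
  \col_j (\sum_(i < #|S| | sidx S i == j) y i 0).

Definition unit_top_eigvec (p : nat) (A : 'M[R]_p) (y : 'cV[R]_p) : Prop :=
  norm2 y = 1 /\
  exists lam : R, A *m y = lam *: y /\ (forall mu : R, eigenvalue A mu -> mu <= lam).

Definition Gammahat (n m : nat) (x : 'I_m -> 'cV[R]_n) : 'M[R]_n :=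
  (m%:R)^-1 *: (\sum_i (x i *m (x i)^T)) - 1%:M.

Definition eventE (C0 theta : R) (n m : nat) (W : 'M[R]_n) : Prop :=
  forall S : {set 'I_n}, S != finset.set0 ->
    opnorm (subsq S W) <=
      C0 * (1 + theta) * Num.sqrt (#|S|%:R * ln (n%:R : R) / m%:R).

End Defs.

From HB Require Import structures.
From mathcomp Require Import all_boot all_order all_algebra.
From mathcomp Require Import all_classical all_reals all_analysis.
From mathcomp Require Import ring lra.
Import Order.TTheory GRing.Theory Num.Theory.
Import numFieldNormedType.Exports.
Local Open Scope ring_scope.
Local Open Scope classical_set_scope.
Set Implicit Arguments. Unset Strict Implicit. Unset Printing Implicit Defensive.

(* On S the sample matrix is a rank-one spike plus noise,
   Gammahat_{S,S} = theta v_S v_S^T + W_{S,S}, and on the event E the noise has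
   operator norm at most eps = C0 (1 + theta) sqrt (k log n / m).  Let y be the
   top unit eigenvector, lam its eigenvalue and c the cosine of the angle
   between y and v_S.
   - The top eigenvalue dominates every Rayleigh quotient; at v_S / |v_S| this
     gives lam >= theta |v_S|^2 - eps >= theta gamma - eps.
   - Pairing the eigen-equation with the component of y orthogonal to v_S kills
     the spike, so lam (1 - c^2) <= sqrt (1 - c^2) eps.
   Together, (1 - c^2) (theta gamma)^2 <= 4 eps^2, i.e.
   alpha0 = |v_S| |c| >= sqrt gamma sqrt (1 - 4 eps^2 / (theta gamma)^2).
   The Rayleigh bound comes from compactness rather than a spectral theorem: a
   maximiser of w A w^T on the unit sphere satisfies the first-order condition,
   so it is an eigenvector and the maximum is an eigenvalue. *)

Lemma eq0_of_quadratic_ge0 (F : realFieldType) (N c : F) : 0 <= N ->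
  (forall t, 0 < t -> 0 <= t ^+ 2 * c - 2 * t * N) -> N = 0.
Proof.
move=> N_ge0 quad_ge0; apply/eqP; rewrite eq_le N_ge0 andbT leNgt; apply/negP => N_gt0.
have c1_gt0 : 0 < `|c| + 1 by rewrite ltr_pwDr.
have := quad_ge0 (N / (`|c| + 1)) (divr_gt0 N_gt0 c1_gt0).
set t := N / _; have tE : t * (`|c| + 1) = N by rewrite mulfVK ?gt_eqF.
have t_gt0 : 0 < t by rewrite divr_gt0.
have : c <= `|c| := ler_norm c.
nra.
Qed.

Lemma sum_mul_sqr_le (F : realDomainType) (I : finType) (f g : I -> F) :
  (\sum_i f i * g i) ^+ 2 <= (\sum_i f i ^+ 2) * (\sum_i g i ^+ 2).
Proof.
set P := \sum_i f i ^+ 2; set Q := \sum_i g i ^+ 2; set S := \sum_i f i * g i.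
have lagrange : \sum_i \sum_j (f i * g j - f j * g i) ^+ 2 = 2 * (P * Q - S ^+ 2).
  have e1 : P * Q = \sum_i \sum_j f i ^+ 2 * g j ^+ 2 by rewrite big_distrlr.
  have e2 : P * Q = \sum_i \sum_j g i ^+ 2 * f j ^+ 2.
    by rewrite mulrC big_distrlr exchange_big.
  have e3 : S ^+ 2 = \sum_i \sum_j (f i * g i) * (f j * g j).
    by rewrite expr2 big_distrlr.
  have -> : 2 * (P * Q - S ^+ 2) = P * Q + P * Q - 2 * S ^+ 2 by ring.
  rewrite {1}e1 e2 e3 mulr_sumr -big_split -sumrB; apply: eq_bigr => i _.
  rewrite mulr_sumr -big_split -sumrB; apply: eq_bigr => j _ /=; ring.
rewrite -subr_ge0 -(pmulr_rge0 _ (ltr0n _ 2)) -lagrange.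
by do 2![apply: sumr_ge0 => ? _]; exact: sqr_ge0.
Qed.

Lemma half_le_sqrt_mul_sqrt_max (F : rcfType) (gam X : F) :
  0 <= gam <= 2 -> X <= 1 / 2 ->
  gam / 2 <= Num.sqrt gam * Num.sqrt (Num.max (1 - X) 0).
Proof.
move=> /andP[gam_ge0 gam_le2] X_le.
have max_ge : 1 / 2 <= Num.max (1 - X) 0 by rewrite le_max; apply/orP; left; lra.
rewrite -sqrtrM // -(ger0_norm (_ : 0 <= gam / 2)) ?divr_ge0 // -sqrtr_sqr.
rewrite ler_sqrt; last by rewrite mulr_ge0 // le_max lexx orbT.
by apply: le_trans (ler_wpM2l gam_ge0 max_ge); rewrite -subr_ge0; nra.
Qed.

Section Euclidean.
Variables (R : realType) (p : nat).
Implicit Types (u w : 'cV[R]_p).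

Lemma dotE u w : dot u w = (u^T *m w) 0 0.
Proof. by rewrite /dot mxE; apply: eq_bigr => i _; rewrite mxE. Qed.

Lemma dotC u w : dot u w = dot w u.
Proof. by apply: eq_bigr => i _; rewrite mulrC. Qed.

Lemma dotDr u w1 w2 : dot u (w1 + w2) = dot u w1 + dot u w2.
Proof. by rewrite !dotE mulmxDr mxE. Qed.

Lemma dotBr u w1 w2 : dot u (w1 - w2) = dot u w1 - dot u w2.
Proof. by rewrite !dotE mulmxBr !mxE. Qed.

Lemma dotZr c u w : dot u (c *: w) = c * dot u w.
Proof. by rewrite !dotE -scalemxAr mxE. Qed.

Lemma dotBl u1 u2 w : dot (u1 - u2) w = dot u1 w - dot u2 w.
Proof. by rewrite dotC dotBr !(dotC w). Qed.

Lemma dotZl c u w : dot (c *: u) w = c * dot u w.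
Proof. by rewrite dotC dotZr dotC. Qed.

Lemma dot_ge0 u : 0 <= dot u u.
Proof. by apply: sumr_ge0 => i _; rewrite -expr2 sqr_ge0. Qed.

Lemma norm2_ge0 u : 0 <= norm2 u.
Proof. exact: sqrtr_ge0. Qed.

Lemma norm2_sqr u : norm2 u ^+ 2 = dot u u.
Proof.
rewrite /norm2 sqr_sqrtr; last by apply: sumr_ge0 => i _; exact: sqr_ge0.
by apply: eq_bigr => i _; rewrite expr2.
Qed.

Lemma norm2_dot u : norm2 u = Num.sqrt (dot u u).
Proof. by rewrite -norm2_sqr sqrtr_sqr ger0_norm ?norm2_ge0. Qed.

Lemma dot_sqr_le u w : dot u w ^+ 2 <= dot u u * dot w w.
Proof.
have sqE v : dot v v = \sum_i v i 0 ^+ 2 by apply: eq_bigr => i _; rewrite expr2.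
by rewrite !sqE; exact: sum_mul_sqr_le.
Qed.

Lemma normr_dot_le u w : `|dot u w| <= norm2 u * norm2 w.
Proof.
rewrite !norm2_dot -sqrtrM ?dot_ge0 // -sqrtr_sqr ler_sqrt ?dot_sqr_le //.
by rewrite mulr_ge0 ?dot_ge0.
Qed.

Lemma dot_le u w : dot u w <= norm2 u * norm2 w.
Proof. exact: le_trans (ler_norm _) (normr_dot_le u w). Qed.

Lemma outer_mulmx u w : (u *m u^T) *m w = dot u w *: u.
Proof. by rewrite -mulmxA [u^T *m w]mx11_scalar -dotE mul_mx_scalar. Qed.

Lemma norm2_mulmx_le q (E : 'M[R]_(q, p)) u :
  norm2 (E *m u) <= Num.sqrt (\sum_i \sum_j E i j ^+ 2) * norm2 u.
Proof.
have E2_ge0 : 0 <= \sum_i \sum_j E i j ^+ 2.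
  by do 2![apply: sumr_ge0 => ? _]; exact: sqr_ge0.
rewrite /norm2 -sqrtrM // ler_sqrt; last first.
  by rewrite mulr_ge0 // sumr_ge0 // => j _; exact: sqr_ge0.
by rewrite mulr_suml; apply: ler_sum => i _; rewrite mxE; exact: sum_mul_sqr_le.
Qed.

Lemma norm2_mulmx_le_opnorm q (E : 'M[R]_(q, p)) u :
  norm2 u = 1 -> norm2 (E *m u) <= opnorm E.
Proof.
move=> u1; apply: sup_upper_bound; last by exists u.
split; first by exists (norm2 (E *m u)), u.
exists (Num.sqrt (\sum_i \sum_j E i j ^+ 2)) => _ [w /= w1 <-].
by rewrite -[X in _ <= X]mulr1 -w1 norm2_mulmx_le.
Qed.
End Euclidean.

Section Rayleigh.
Variables (R : realType) (p : nat).
Implicit Types (A B : 'M[R]_p) (w z : 'rV[R]_p).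

Definition qform A w : R := (w *m A *m w^T) 0 0.

Lemma qformZ A c w : qform A (c *: w) = c ^+ 2 * qform A w.
Proof. by rewrite /qform linearZ /= -!scalemxAl -scalemxAr scalerA mxE expr2. Qed.

Lemma qformB A B w : qform (A - B) w = qform A w - qform B w.
Proof. by rewrite /qform mulmxBr mulmxBl !mxE. Qed.

Lemma qformZl c A w : qform (c *: A) w = c * qform A w.
Proof. by rewrite /qform -scalemxAr -scalemxAl mxE. Qed.

Lemma qform1 w : qform 1%:M w = \sum_j w 0 j ^+ 2.
Proof. by rewrite /qform mulmx1 mxE; apply: eq_bigr => j _; rewrite mxE expr2. Qed.

Lemma qform1_ge0 w : 0 <= qform 1%:M w.
Proof. by rewrite qform1 sumr_ge0 // => j _; exact: sqr_ge0. Qed.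

Lemma qform1_eq0 w : qform 1%:M w = 0 -> w = 0.
Proof.
rewrite qform1 => /eqP; rewrite psumr_eq0 => [/allP w0|j _]; last exact: sqr_ge0.
apply/rowP => j; apply/eqP; rewrite mxE -sqrf_eq0.
exact: (implyP (w0 j (mem_index_enum j))).
Qed.

Lemma qform_continuous A : continuous (qform A).
Proof.
have -> : qform A = fun w => \sum_j (\sum_i w 0 i * A i j) * w 0 j.
  apply: funext => w; rewrite /qform mxE; apply: eq_bigr => j _.
  by rewrite !mxE; congr (_ * _); apply: eq_bigr => i _; rewrite mxE.
apply: continuous_big => [|j _ w]; first exact: add_continuous.
apply: continuousM; last exact: coord_continuous.
apply: (continuous_big add_continuous) => i _ {}w.
by apply: continuousM; [exact: coord_continuous | exact: cst_continuous].
Qed.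

Lemma qform_expand B a b t : B^T = B ->
  qform B (a + t *: b) =
  qform B a + 2 * t * (a *m B *m b^T) 0 0 + t ^+ 2 * qform B b.
Proof.
move=> B_sym; have symE : (b *m B *m a^T) 0 0 = (a *m B *m b^T) 0 0.
  have trE (X : 'M[R]_1) : X 0 0 = X^T 0 0 by rewrite mxE.
  by rewrite trE !trmx_mul trmxK B_sym mulmxA.
rewrite /qform linearD linearZ /= !mulmxDl !mulmxDr -!scalemxAl -!scalemxAr.
move: symE; set ab := a *m B *m b^T; set ba := b *m B *m a^T.
by rewrite !mxE => ->; ring.
Qed.

Lemma psd_qform_eq0 B z : B^T = B -> (forall w, 0 <= qform B w) ->
  qform B z = 0 -> z *m B = 0.
Proof.
move=> B_sym B_psd Bz0; set e := z *m B.
apply: qform1_eq0; apply: (eq0_of_quadratic_ge0 (qform1_ge0 e) (c := qform B e)).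
move=> t _; have := B_psd (z + (- t) *: e).
rewrite qform_expand // Bz0 add0r sqrrN mulrN /qform mulmx1 /e.
by rewrite addrC mulNr.
Qed.

Lemma rayleigh_maximizer A : (0 < p)%N ->
  exists2 z, qform 1%:M z = 1 & forall w, qform A w <= qform A z * qform 1%:M w.
Proof.
move=> p_gt0; pose K := [set w | qform 1%:M w = 1].
have K_neq0 : K !=set0.
  exists (delta_mx 0 (Ordinal p_gt0)).
  by rewrite /K /= /qform mulmx1 trmx_delta mul_delta_mx mxE !eqxx.
have K_compact : compact K.
  apply: (@subclosed_compact _ _ [set w : 'rV[R]_p | forall i, `[-1, 1]%classic (w 0 i)]).
  - apply: (@preimage_closed _ _ (qform 1%:M) [set x | x = 1]); last exact: closed_eq.
    by move=> w _; exact: qform_continuous.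
  - by apply: (@rV_compact R p (fun=> `[-1, 1]%classic)) => i; exact: segment_compact.
  - move=> w /= Kw i; rewrite in_itv /=.
    have : w 0 i ^+ 2 <= 1.
      by rewrite -Kw qform1 (bigD1 i) //= lerDl sumr_ge0 // => j _; exact: sqr_ge0.
    by move=> wi_le1; apply/andP; split; nra.
have [z Kz z_max] := compact_EVT_max K_neq0 K_compact
  (continuous_subspaceT (@qform_continuous A)).
exists z => [|w]; first by move: Kz; rewrite inE.
have [/qform1_eq0 ->|w_neq0] := eqVneq (qform 1%:M w) 0.
  by rewrite /qform !mul0mx mxE mulr0.
have w_gt0 : 0 < qform 1%:M w by rewrite lt_neqAle eq_sym w_neq0 qform1_ge0.
pose s := Num.sqrt (qform 1%:M w).
have s_gt0 : 0 < s by rewrite sqrtr_gt0.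
have s2 : s ^+ 2 = qform 1%:M w by rewrite sqr_sqrtr ?qform1_ge0.
have : s^-1 *: w \in K by rewrite inE /K /= qformZ exprVn s2 mulVf ?gt_eqF.
move/z_max; rewrite qformZ exprVn s2 ler_pdivrMl //.
by rewrite mulrC.
Qed.

Lemma rayleigh_maximizer_eigen A z : A^T = A -> qform 1%:M z = 1 ->
  (forall w, qform A w <= qform A z * qform 1%:M w) -> z *m A = qform A z *: z.
Proof.
move=> A_sym z1 z_max; pose B := qform A z *: 1%:M - A.
have qformE w : qform B w = qform A z * qform 1%:M w - qform A w.
  by rewrite qformB qformZl.
have B_sym : B^T = B by rewrite linearB /= linearZ /= trmx1 A_sym.
have : z *m B = 0.
  apply: psd_qform_eq0 => // [w|]; rewrite qformE; first by rewrite subr_ge0.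
  by rewrite z1 mulr1 subrr.
by rewrite mulmxBr -scalemxAr mulmx1 => /eqP; rewrite subr_eq0 => /eqP.
Qed.
End Rayleigh.

Lemma dot_mulmx_le_top_eigenvalue (R : realType) p (A : 'M[R]_p) lam u :
  A^T = A -> (forall mu, eigenvalue A mu -> mu <= lam) -> norm2 u = 1 ->
  dot u (A *m u) <= lam.
Proof.
move=> A_sym lam_top u1.
have p_gt0 : (0 < p)%N.
  case: p {A A_sym lam_top} u u1 => // u.
  by rewrite /norm2 big_ord0 sqrtr0 => /eqP; rewrite eq_sym oner_eq0.
have [z z1 z_max] := rayleigh_maximizer A p_gt0.
have : eigenvalue A (qform A z).
  apply/eigenvalueP; exists z; first exact: rayleigh_maximizer_eigen.
  apply/eqP => z0; move: z1; rewrite z0 /qform !mul0mx mxE => /eqP.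
  by rewrite eq_sym oner_eq0.
move/lam_top; apply: le_trans.
have := z_max u^T; rewrite /qform trmxK mulmx1 -mulmxA -!dotE -norm2_sqr u1.
by rewrite expr1n mulr1.
Qed.

Section SpikedPerturbation.
Variables (R : realType) (p : nat) (A E : 'M[R]_p) (v y : 'cV[R]_p).
Variables (theta eps lam : R).
Hypotheses (A_sym : A^T = A) (AE : A = E + theta *: (v *m v^T)).
Hypothesis v_gt0 : 0 < norm2 v.
Hypothesis E_le : forall u, norm2 u = 1 -> norm2 (E *m u) <= eps.
Hypotheses (y1 : norm2 y = 1) (y_eig : A *m y = lam *: y).
Hypothesis lam_top : forall mu, eigenvalue A mu -> mu <= lam.

Let a := norm2 v.
Let u := a^-1 *: v.
Let c := dot y v / a.

Let a_neq0 : a != 0. Proof. by rewrite gt_eqF. Qed.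
Let vE : v = a *: u. Proof. by rewrite /u scalerA divff // scale1r. Qed.
Let dot_vv : dot v v = a ^+ 2. Proof. by rewrite -norm2_sqr. Qed.
Let dot_uu : dot u u = 1.
Proof. by rewrite /u dotZl dotZr dot_vv mulrA -expr2 -exprMn mulVf // expr1n. Qed.
Let u1 : norm2 u = 1. Proof. by rewrite norm2_dot dot_uu sqrtr1. Qed.
Let dot_vu : dot v u = a. Proof. by rewrite /u dotZr dot_vv expr2 mulKf. Qed.
Let cE : c = dot y u. Proof. by rewrite /u dotZr mulrC. Qed.
Let AmulE w : A *m w = E *m w + (theta * dot v w) *: v.
Proof. by rewrite AE mulmxDl -scalemxAl outer_mulmx scalerA. Qed.

Lemma top_eigenvalue_ge : theta * norm2 v ^+ 2 - eps <= lam.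
Proof.
apply: le_trans (dot_mulmx_le_top_eigenvalue A_sym lam_top u1).
rewrite AmulE dotDr dotZr dot_vu (dotC u v) dot_vu -/a -mulrA -expr2.
rewrite [X in _ <= X]addrC lerD2l.
have := normr_dot_le u (E *m u); rewrite u1 mul1r => /le_trans/(_ (E_le u1)).
by rewrite ler_norml lerNl => /andP[].
Qed.

Lemma top_eigenvalue_mul_sin2_le :
  lam * (1 - c ^+ 2) <= Num.sqrt (1 - c ^+ 2) * eps.
Proof.
set y_perp := y - c *: u.
have perp_u : dot y_perp u = 0 by rewrite dotBl dotZl dot_uu mulr1 -cE subrr.
have perp_v : dot y_perp v = 0 by rewrite vE dotZr perp_u mulr0.
have dot_yy : dot y y = 1 by rewrite -norm2_sqr y1 expr1n.
have perp_y : dot y_perp y = 1 - c ^+ 2.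
  by rewrite dotBl dotZl dot_yy (dotC u) -cE expr2.
have perp_perp : dot y_perp y_perp = 1 - c ^+ 2.
  by rewrite {2}/y_perp dotBr dotZr perp_u mulr0 subr0.
have -> : lam * (1 - c ^+ 2) = dot y_perp (E *m y).
  by rewrite -perp_y -dotZr -y_eig AmulE dotDr dotZr perp_v mulr0 addr0.
rewrite -perp_perp -norm2_dot; apply: le_trans (dot_le _ _) _.
by rewrite ler_wpM2l ?norm2_ge0 ?E_le.
Qed.

Lemma sin2_top_eigvec_le gam : 0 < theta -> 0 < gam -> gam <= norm2 v ^+ 2 ->
  (1 - c ^+ 2) * (theta * gam) ^+ 2 <= 4 * eps ^+ 2.
Proof.
move=> theta_gt0 gam_gt0 gam_le.
have eps_ge0 : 0 <= eps := le_trans (norm2_ge0 _) (E_le u1).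
have lam_ge : theta * a ^+ 2 - eps <= lam := top_eigenvalue_ge.
have tg_le : theta * gam <= theta * a ^+ 2 by rewrite ler_pM2l.
have c2_le1 : c ^+ 2 <= 1.
  by have := dot_sqr_le y u; rewrite -cE dot_uu -norm2_sqr y1 expr1n mulr1.
have := top_eigenvalue_mul_sin2_le; set s := Num.sqrt _ => lam_s_le.
have s_ge0 : 0 <= s := sqrtr_ge0 _.
have s2 : s ^+ 2 = 1 - c ^+ 2 by rewrite sqr_sqrtr // subr_ge0.
rewrite -s2 in lam_s_le *.
suff tgs_le : theta * gam * s <= 2 * eps.
  have : (theta * gam * s) ^+ 2 <= (2 * eps) ^+ 2.
    by rewrite ler_pXn2r // ?nnegrE ?mulr_ge0 // ltW.
  by rewrite !exprMn; lra.
have [->|s_neq0] := eqVneq s 0; first by rewrite mulr0 mulr_ge0.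
have s_gt0 : 0 < s by rewrite lt_neqAle eq_sym s_neq0.
have lam_s : lam * s <= eps.
  by rewrite -(ler_pM2r s_gt0) -mulrA -expr2 [eps * s]mulrC.
have s_le1 : s <= 1 by nra.
(* theta gam s <= (lam + eps) s = lam s + eps s <= 2 eps *)
nra.
Qed.

Lemma top_eigvec_alignment gam : 0 < theta -> 0 < gam -> Num.sqrt gam <= norm2 v ->
  Num.sqrt gam * Num.sqrt (Num.max (1 - 4 * eps ^+ 2 / (theta ^+ 2 * gam ^+ 2)) 0)
    <= `|dot y v|.
Proof.
move=> theta_gt0 gam_gt0 sgam_le.
have gam_le : gam <= a ^+ 2.
  by rewrite -(sqr_sqrtr (ltW gam_gt0)) lerXn2r ?nnegrE ?sqrtr_ge0 ?norm2_ge0.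
have := sin2_top_eigvec_le theta_gt0 gam_gt0 gam_le.
rewrite -ler_pdivlMr ?exprn_gt0 ?mulr_gt0 // -exprMn => sin2_le.
have -> : dot y v = a * c by rewrite /c mulrC divfK.
rewrite normrM ger0_norm ?norm2_ge0 // ler_pM ?sqrtr_ge0 //.
by rewrite -sqrtr_sqr ler_sqrt ?sqr_ge0 // ge_max sqr_ge0 andbT; lra.
Qed.

End SpikedPerturbation.

Lemma Gammahat_sym (R : realType) n m (x : 'I_m -> 'cV[R]_n) :
  (Gammahat x)^T = Gammahat x.
Proof.
rewrite /Gammahat linearB linearZ /= trmx1 linear_sum /=.
by congr (_ *: _ - _); apply: eq_bigr => i _; rewrite trmx_mul trmxK.
Qed.

Section Submatrices.
Variables (R : realType) (n : nat) (S : {set 'I_n}).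

Lemma trmx_subsq (M : 'M[R]_n) : (subsq S M)^T = subsq S M^T.
Proof. by apply/matrixP => i j; rewrite !mxE. Qed.

Lemma subsqB_outer (G : 'M[R]_n) theta (v : 'cV[R]_n) :
  subsq S (G - theta *: (v *m v^T)) =
  subsq S G - theta *: (vsub S v *m (vsub S v)^T).
Proof.
apply/matrixP => i j; rewrite !mxE; congr (_ - _ * _).
by apply: eq_bigr => k _; rewrite !mxE.
Qed.

Lemma dot_pad (y : 'cV[R]_#|S|) (v : 'cV[R]_n) : dot (pad y) v = dot y (vsub S v).
Proof.
rewrite /dot /pad.
under eq_bigr do rewrite mxE big_distrl /= big_mkcond /=.
rewrite exchange_big /=; apply: eq_bigr => i _.
by rewrite -big_mkcond /= (big_pred1 (sidx i)) ?mxE // => j; rewrite eq_sym.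
Qed.

Lemma eventE_subsq_mulmx_le C0 theta m k (G : 'M[R]_n) (v : 'cV[R]_n) u :
  (0 < k)%N -> #|S| = k -> eventE C0 theta m (G - theta *: (v *m v^T)) ->
  norm2 u = 1 ->
  norm2 ((subsq S G - theta *: (vsub S v *m (vsub S v)^T)) *m u) <=
    C0 * (1 + theta) * Num.sqrt (k%:R * ln (n%:R : R) / m%:R).
Proof.
move=> k_gt0 Sk hE u1; rewrite -subsqB_outer -[in X in Num.sqrt X]Sk.
by apply: le_trans (norm2_mulmx_le_opnorm _ u1) (hE _ _); rewrite -card_gt0 Sk.
Qed.
End Submatrices.

Local Close Scope classical_set_scope.
Unset Implicit Arguments.

Theorem proposition5 (R : realType) (C0 : R) : 0 < C0 ->
  exists C1 : R, 0 < C1 /\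
  exists C : R, exists c0 : R, 0 < C /\ 0 < c0 /\ c0 <= 1 / 2 /\
  forall (n m k : nat) (theta : R) (v : 'cV[R]_n) (x : 'I_m -> 'cV[R]_n),
    (2 <= n)%N -> (1 <= m)%N -> 0 < theta -> (1 <= k <= n)%N ->
    norm2 v = 1 -> (#|[set i | v i ord0 != 0%R]| <= k)%N ->
    eventE C0 theta m (Gammahat x - theta *: (v *m v^T)) ->
    forall (gamma : R) (S : {set 'I_n}) (y : 'cV[R]_#|S|),
      0 < gamma < 1 -> #|S| = k ->
      Num.sqrt gamma <= norm2 (vsub S v) ->
      unit_top_eigvec (subsq S (Gammahat x)) y ->
      let alpha0 := `|dot (pad y) v| in
      Num.sqrt gamma *
        Num.sqrt (Num.max (1 - C1 * (1 + theta) ^+ 2 / (theta ^+ 2 * gamma ^+ 2)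
                                 * (k%:R * ln (n%:R : R) / m%:R)) 0)
        <= alpha0 /\
      (C * (1 + theta) ^+ 2 / (theta ^+ 2 * gamma ^+ 2) * k%:R * ln (n%:R : R) <= m%:R ->
       c0 * gamma <= alpha0).
Proof.
move=> C0_gt0; have C0sq_gt0 : 0 < C0 ^+ 2 by rewrite exprn_gt0.
exists (4 * C0 ^+ 2); split; first by rewrite mulr_gt0.
exists (8 * C0 ^+ 2), (1 / 2); split; first exact: mulr_gt0.
split; first lra; split; first lra.
move=> n m k theta v x n_ge2 m_ge1 theta_gt0 /andP[k_gt0 _] _ _ hE gam S y.
move=> /andP[gam_gt0 gam_lt1] Sk vS_ge [y1 [lam [y_eig lam_top]]] alpha0.
set t := k%:R * _ / _; set eps := C0 * (1 + theta) * Num.sqrt t.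
have t_ge0 : 0 <= t.
  by rewrite divr_ge0 ?mulr_ge0 ?ln_ge0 ?ler1n // (leq_trans _ n_ge2).
have A_sym : (subsq S (Gammahat x))^T = subsq S (Gammahat x).
  by rewrite trmx_subsq Gammahat_sym.
have vS_gt0 : 0 < norm2 (vsub S v) by apply: lt_le_trans vS_ge; rewrite sqrtr_gt0.
have := top_eigvec_alignment A_sym (esym (subrK _ _)) vS_gt0
  (fun _ => eventE_subsq_mulmx_le k_gt0 Sk hE) y1 y_eig lam_top
  theta_gt0 gam_gt0 vS_ge.
rewrite -dot_pad -/alpha0.
have -> : 4 * eps ^+ 2 / (theta ^+ 2 * gam ^+ 2) =
    4 * C0 ^+ 2 * (1 + theta) ^+ 2 / (theta ^+ 2 * gam ^+ 2) * t.
  by rewrite /eps !exprMn sqr_sqrtr //; field; rewrite !gt_eqF.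
move=> alpha0_ge; split => // m_ge; apply: le_trans alpha0_ge.
rewrite mulrC mul1r; apply: half_le_sqrt_mul_sqrt_max; first by apply/andP; split; lra.
rewrite /t (_ : _ * _ = 8 * C0 ^+ 2 * (1 + theta) ^+ 2 / (theta ^+ 2 * gam ^+ 2)
    * k%:R * ln n%:R / m%:R / 2); last by field; rewrite !gt_eqF ?ltr0n.
by rewrite ler_pM2r ?invr_gt0 // ler_pdivrMr ?ltr0n // mul1r.
Qed.
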